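(* Let $X$ be a Banach lattice and $S$ a convex $C_0$-semigroup on $X$. Let $(x_n)_{n\in\mathbb N}$, $(y_n)_{n\in\mathbb N}$ be sequences in $X$ with $x_n\to x\in X$ and $y_n\to y\in X$, and let $(h_n)_{n\in\mathbb N}$ be a sequence in $(0,\infty)$ with $h_n\downarrow0$. Then $S_{x_n}(h_n)y_n\to y$.
   Context: An operator $T\colon X\to X$ is convex if $T(\lambda x+(1-\lambda)y)\le\lambda Tx+(1-\lambda)Ty$ for all $x,y\in X$, $\lambda\in[0,1]$, and bounded if $\sup_{\|x\|\le r}\|Tx\|<\infty$ for all $r>0$. A convex $C_0$-semigroup is a family $(S(t))_{t\ge0}$ of bounded convex operators $X\to X$ with $S(0)=\mathrm{id}$, $S(t+s)=S(t)S(s)$ for all $s,t\ge0$, and $S(t)x\to x$ as $t\downarrow0$ for all $x$. For $t\ge0$ and $x,y\in X$, $S_x(t)y:=S(t)(x+y)-S(t)x$. *)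

From HB Require Import structures.
From mathcomp Require Import all_boot all_order all_algebra.
From mathcomp Require Import all_classical all_reals all_analysis.
Set Implicit Arguments. Unset Strict Implicit. Unset Printing Implicit Defensive.
Import Order.TTheory GRing.Theory Num.Theory.
Import numFieldNormedType.Exports.
Local Open Scope ring_scope.
Local Open Scope classical_set_scope.

Record banach_lattice (R : realType) (X : completeNormedModType R) := BanachLattice {
  bl_le : X -> X -> Prop;
  bl_join : X -> X -> X;
  bl_le_refl : forall x, bl_le x x;
  bl_le_anti : forall x y, bl_le x y -> bl_le y x -> x = y;
  bl_le_trans : forall x y z, bl_le x y -> bl_le y z -> bl_le x z;
  bl_join_ubl : forall x y, bl_le x (bl_join x y);
  bl_join_ubr : forall x y, bl_le y (bl_join x y);
  bl_join_least : forall x y z, bl_le x z -> bl_le y z -> bl_le (bl_join x y) z;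
  bl_le_add : forall x y z, bl_le x y -> bl_le (x + z) (y + z);
  bl_le_scale : forall (a : R) x y, 0 <= a -> bl_le x y -> bl_le (a *: x) (a *: y);
  bl_norm_mono : forall x y,
    bl_le (bl_join x (- x)) (bl_join y (- y)) -> `|x| <= `|y|
}.

Section Ops.
Variables (R : realType) (X : completeNormedModType R) (L : banach_lattice X).

Definition convex_op (T : X -> X) : Prop :=
  forall (x y : X) (l : R), 0 <= l -> l <= 1 ->
    bl_le L (T (l *: x + (1 - l) *: y)) (l *: T x + (1 - l) *: T y).

Definition bounded_op (T : X -> X) : Prop :=
  forall r : R, 0 < r -> exists M : R, forall x : X, `|x| <= r -> `|T x| <= M.

(* Convex C_0-semigroup; S t is only relevant for t >= 0. *)
Definition convex_C0_semigroup (S : R -> X -> X) : Prop :=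
  [/\ (forall t : R, 0 <= t -> convex_op (S t) /\ bounded_op (S t)),
      S 0 = id,
      (forall s t : R, 0 <= s -> 0 <= t -> S (t + s) = S t \o S s)
    & (forall x : X, S t x @[t --> 0^'+] --> x)].

Definition S_at (S : R -> X -> X) (x : X) (t : R) (y : X) : X :=
  S t (x + y) - S t x.

End Ops.

From HB Require Import structures.
From mathcomp Require Import all_boot all_order all_algebra.
From mathcomp Require Import all_classical all_reals all_analysis.
From mathcomp Require Import ring lra.
Import Order.TTheory GRing.Theory Num.Theory.
Import numFieldNormedType.Exports.
Local Open Scope ring_scope.
Local Open Scope classical_set_scope.

(* Put T n := S (h n).  Strong continuity gives T n z --> z for every z, so the
   family (T n) is pointwise bounded; by Baire's theorem it is uniformly bounded
   on some ball, and then, by convexity, on a ball around every point.  In a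
   Banach lattice a convex operator bounded by M on the ball B(p, 2 rho) is
   (4 M / rho)-Lipschitz on B(p, rho), so the T n are equi-Lipschitz near every
   point.  Hence T n (z n) --> z whenever z n --> z, and
   S_at S (xs n) (h n) (ys n) = T n (xs n + ys n) - T n (xs n) --> (x + y) - x. *)

Section BanachLatticeTheory.
Context {R : realType} {X : completeNormedModType R} {L : banach_lattice X}.
Implicit Types a b c u v x y z : X.

Lemma bl_leD2l z {x y} : bl_le L x y -> bl_le L (z + x) (z + y).
Proof. by move=> /(bl_le_add z); rewrite ![_ + z]addrC. Qed.

Lemma bl_leD {a b c d} : bl_le L a b -> bl_le L c d -> bl_le L (a + c) (b + d).
Proof. by move=> /(bl_le_add c) ac /(bl_leD2l b); apply: bl_le_trans. Qed.

Lemma bl_leN2 {x y} : bl_le L x y -> bl_le L (- y) (- x).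
Proof.
by move=> /(bl_le_add (- x - y)); rewrite addrA subrr add0r addrCA subrr addr0.
Qed.

Definition bl_abs u := bl_join L u (- u).

Lemma bl_abs_ge0 u : bl_le L 0 (bl_abs u).
Proof.
have := bl_leD (bl_join_ubl L u (- u)) (bl_join_ubr L u (- u)).
rewrite subrr => /(bl_le_scale (_ : 0 <= 2^-1 :> R)).
rewrite scaler0 -mulr2n -[X in _ *: X]scaler_nat scalerA mulVf ?pnatr_eq0 //.
rewrite scale1r; apply.
by rewrite invr_ge0.
Qed.

Lemma ger0_bl_abs {v} : bl_le L 0 v -> bl_abs v = v.
Proof.
move=> v0; apply: bl_le_anti; last exact: bl_join_ubl.
apply: bl_join_least; first exact: bl_le_refl.
by have := bl_leN2 v0; rewrite oppr0 => /bl_le_trans; apply.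
Qed.

Lemma norm_bl_abs u : `|bl_abs u| = `|u|.
Proof.
have absK := ger0_bl_abs (bl_abs_ge0 u).
apply/eqP; rewrite eq_le; apply/andP; split; apply: (bl_norm_mono (b := L));
  by move: absK; rewrite /bl_abs => ->; exact: bl_le_refl.
Qed.

Lemma bl_norm_mono_ge0 {u v} : bl_le L 0 u -> bl_le L u v -> `|u| <= `|v|.
Proof.
move=> u0 uv; apply: (bl_norm_mono (b := L)).
by rewrite -!/(bl_abs _) !ger0_bl_abs //; apply: bl_le_trans uv.
Qed.

Lemma bl_norm_sandwich {a b c} :
  bl_le L a c -> bl_le L c b -> `|c| <= `|a| + `|b|.
Proof.
move=> ac cb; have [a0 b0] := (bl_abs_ge0 a, bl_abs_ge0 b).
have c_le : bl_le L (bl_abs c) (bl_abs a + bl_abs b).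
  apply: bl_join_least.
    apply: bl_le_trans cb _; rewrite addrC.
    by apply: bl_le_trans (bl_leD2l _ a0); rewrite addr0; exact: bl_join_ubl.
  apply: bl_le_trans (bl_leN2 ac) _.
  by apply: bl_le_trans (bl_leD2l _ b0); rewrite addr0; exact: bl_join_ubr.
rewrite -(norm_bl_abs c) -(norm_bl_abs a) -(norm_bl_abs b).
apply: le_trans (bl_norm_mono_ge0 (bl_abs_ge0 c) c_le) _; exact: ler_normD.
Qed.

End BanachLatticeTheory.

Section ConvexOperator.
Context {R : realType} {X : completeNormedModType R} {L : banach_lattice X}.
Context {T : X -> X}.
Hypothesis convT : convex_op L T.

Lemma convex_op_mid a b :
  bl_le L (T (2^-1 *: a + 2^-1 *: b)) (2^-1 *: T a + 2^-1 *: T b).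
Proof.
have half : 1 - 2^-1 = 2^-1 :> R by field.
have := convT a b 2^-1; rewrite half; apply; first by rewrite invr_ge0.
by rewrite invf_le1 ?ler1n.
Qed.

Lemma convex_op_ge_reflect p z : bl_le L (2 *: T p - T (2 *: p - z)) (T z).
Proof.
have mid : 2^-1 *: z + 2^-1 *: (2 *: p - z) = p.
  by rewrite -scalerDr addrC subrK scalerA mulVf ?scale1r ?pnatr_eq0.
have := bl_le_scale (ler0n R 2) (convex_op_mid z (2 *: p - z)).
rewrite mid -scalerDr scalerA mulfV ?pnatr_eq0 // scale1r.
by move=> /(bl_le_add (- T (2 *: p - z))); rewrite addrK.
Qed.

Section BoundedNear.
Context {p : X} {rho M : R}.
Hypotheses (rho_gt0 : 0 < rho)
  (TM : forall z, `|z - p| <= 2 * rho -> `|T z| <= M).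

Let M_ge0 : 0 <= M.
Proof.
apply: le_trans (normr_ge0 (T p)) (TM _ _).
by rewrite subrr normr0 mulr_ge0 // ltW.
Qed.

(* z1 is the convex combination of z2 and the point w on the ray from z2 through
   z1 at distance rho beyond z1, with weight d / (d + rho) on w, d = |z1 - z2|. *)
Lemma convex_op_increment_bound {z1 z2} : `|z1 - p| <= rho -> `|z2 - p| <= rho ->
  exists2 b, bl_le L (T z1 - T z2) b & `|b| <= 2 * M / rho * `|z1 - z2|.
Proof.
move=> z1p z2p; have [->|z12] := eqVneq z1 z2.
  by exists 0; rewrite ?subrr ?normr0 ?mulr0 //; exact: bl_le_refl.
set d := `|z1 - z2|; have d_gt0 : 0 < d by rewrite normr_gt0 subr_eq0.
set l := d / (d + rho); have dr_gt0 : 0 < d + rho by rewrite addr_gt0.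
have l_ge0 : 0 <= l by rewrite divr_ge0 // ltW.
have l_le1 : l <= 1 by rewrite ler_pdivrMr // mul1r lerDl ltW.
have l_le : l <= d / rho by rewrite ler_pM2l // lef_pV2 ?posrE // lerDr ltW.
set w := z1 + (rho / d) *: (z1 - z2).
have wp : `|w - p| <= 2 * rho.
  rewrite /w addrAC; apply: le_trans (ler_normD _ _) _.
  rewrite normrZ ger0_norm; last by rewrite divr_ge0 // ltW.
  by rewrite -/d divfK ?gt_eqF // mulr2n mulrDl mul1r lerD2r.
have z1E : l *: w + (1 - l) *: z2 = z1.
  have lrd : l * (rho / d) = 1 - l by rewrite /l; field; rewrite ?gt_eqF.
  rewrite /w scalerDr scalerA lrd scalerBr addrA subrK -scalerDl.
  by rewrite addrC subrK scale1r.
exists (l *: (T w - T z2)).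
  have := bl_le_add (- T z2) (convT w z2 l l_ge0 l_le1); rewrite z1E.
  by rewrite scalerBr scalerBl scale1r addrAC addrA subrK.
have Tw2 : `|T w - T z2| <= M + M.
  apply: le_trans (ler_normB _ _) _; apply: lerD; apply: TM => //.
  by apply: le_trans z2p _; rewrite ler_pMl // ler1n.
rewrite normrZ ger0_norm //; apply: le_trans (ler_wpM2l l_ge0 Tw2) _.
apply: le_trans (ler_wpM2r _ l_le) _; first by rewrite addr_ge0.
by rewrite le_eqVlt; apply/orP; left; apply/eqP; field; rewrite gt_eqF.
Qed.

Lemma convex_op_lipschitz z1 z2 : `|z1 - p| <= rho -> `|z2 - p| <= rho ->
  `|T z1 - T z2| <= 4 * M / rho * `|z1 - z2|.
Proof.
move=> z1p z2p.
have [b T12 b_le] := convex_op_increment_bound z1p z2p.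
have [b' T21 b'_le] := convex_op_increment_bound z2p z1p.
have := bl_leN2 T21; rewrite opprB => /bl_norm_sandwich /(_ T12).
rewrite normrN => /le_trans; apply.
rewrite distrC in b'_le; apply: le_trans (lerD b'_le b_le) _.
by rewrite le_eqVlt; apply/orP; left; apply/eqP; field; rewrite gt_eqF.
Qed.

End BoundedNear.

End ConvexOperator.

Lemma cvg_lipschitz_near {R : realType} {V W : normedModType R} {I : Type}
    {F : set_system I} {FF : Filter F} (T : I -> V -> W) (z : I -> V)
    (p : V) (l : W) (rho K : R) :
  0 < rho ->
  (forall i z1 z2, `|z1 - p| <= rho -> `|z2 - p| <= rho ->
    `|T i z1 - T i z2| <= K * `|z1 - z2|) ->
  z @ F --> p -> T^~ p @ F --> l -> (fun i => T i (z i)) @ F --> l.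
Proof.
move=> rho_gt0 TK zp Tpl.
have -> : (fun i => T i (z i)) = (fun i => (T i (z i) - T i p) + T i p).
  by apply/funext => i; rewrite subrK.
rewrite -[l]add0r; apply: cvgD => //; apply/cvgr0Pnorm_le => e e_gt0.
have Ke_gt0 : 0 < e / (`|K| + 1) by rewrite divr_gt0 // ltr_wpDl.
near=> i.
have zi_rho : `|z i - p| <= rho.
  by rewrite distrC; near: i; exact: cvgr_dist_le.
have zi_e : `|z i - p| <= e / (`|K| + 1).
  by rewrite distrC; near: i; exact: cvgr_dist_le.
apply: le_trans (TK i _ _ zi_rho _) _; first by rewrite subrr normr0 ltW.
move: zi_e; rewrite ler_pdivlMr ?ltr_wpDl // => zi_e.
have := normr_ge0 (z i - p); have := ler_norm K; nra.
Unshelve. all: by end_near.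
Qed.

Lemma convex_op_continuous {R : realType} {X : completeNormedModType R}
    {L : banach_lattice X} (T : X -> X) :
  convex_op L T -> bounded_op T -> continuous T.
Proof.
move=> convT boundT p.
have [M TM] := boundT (`|p| + 2) (ltr_wpDl (normr_ge0 _) (ltr0n _ 2)).
have TM_near z : `|z - p| <= 2 * 1 -> `|T z| <= M.
  rewrite mulr1 => zp; apply: TM; rewrite -(subrK p z) addrC.
  by apply: le_trans (ler_normD _ _) _; rewrite lerD2l.
have T_lip := convex_op_lipschitz convT ltr01 TM_near.
exact: (cvg_lipschitz_near (fun=> T) id p (T p) _ _ ltr01 (fun=> T_lip)
  cvg_id (cvg_cst _)).
Qed.

Lemma Baire_closed_cover {R : realType} {U : completeNormedModType R}
    (C : (set U)^nat) :
  (forall n, closed (C n)) -> (forall u, exists n, C n u) ->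
  exists n u (r : R), 0 < r /\ ball u r `<=` C n.
Proof.
move=> C_closed C_cover; apply: contrapT => no_ball.
have dense_C n : dense (~` C n).
  move=> O [u Ou] O_open; apply/set0P/eqP.
  move=> /disjoints_subset; rewrite setCK => OC.
  have /nbhs_ballP[r r_gt0 ruO] : nbhs u O by apply: open_nbhs_nbhs.
  by apply: no_ball; exists n, u, r; split => // v /ruO /OC.
have /Baire : forall n, open (~` C n) /\ dense (~` C n).
  by move=> n; rewrite openC.
rewrite -setC_bigcup (_ : \bigcup_n C n = setT) ?setCT; first exact: dense0.
by apply/seteqP; split => // u _; have [n Cnu] := C_cover u; exists n.
Qed.

Section ConvexFamily.
Context {R : realType} {X : completeNormedModType R} {L : banach_lattice X}.
Context {T : nat -> X -> X}.
Hypotheses (convT : forall k, convex_op L (T k))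
  (boundT : forall k, bounded_op (T k))
  (ptw_boundT : forall z, exists M, forall k, `|T k z| <= M).

Lemma convex_family_bounded_on_ball :
  exists x0 r M, 0 < r /\ forall k z, ball x0 r z -> `|T k z| <= M.
Proof.
pose C n := \bigcap_k ((fun z => `|T k z|) @^-1` [set t | t <= n%:R]).
have C_closed n : closed (C n).
  apply: closed_bigI => k _; apply: preimage_closed (@closed_le _ _) => z _.
  apply: continuous_comp; last exact: norm_continuous.
  exact: convex_op_continuous (convT k) (boundT k) z.
have C_cover z : exists n, C n z.
  have [M TM] := ptw_boundT z; exists (Num.truncn M).+1 => k _ /=.
  exact: le_trans (TM k) (ltW (truncnS_gt M)).
have [n [x0 [r [r_gt0 ballC]]]] := Baire_closed_cover _ C_closed C_cover.
by exists x0, r, n%:R; split => // k z /ballC; apply.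
Qed.

(* Reflecting the ball B(x0, r) through p bounds T k from above near p;
   convexity at the midpoint p of z and 2 p - z then bounds it from below. *)
Lemma convex_family_bounded_near p :
  exists rho M, 0 < rho /\ forall k z, `|z - p| <= 2 * rho -> `|T k z| <= M.
Proof.
have [x0 [r [M [r_gt0 TM]]]] := convex_family_bounded_on_ball.
have [Mq TMq] := ptw_boundT (2 *: p - x0); have [Mp TMp] := ptw_boundT p.
pose B := 2^-1 * Mq + 2^-1 * M.
have upper k z : `|z - p| < r / 2 -> exists2 b, bl_le L (T k z) b & `|b| <= B.
  move=> zp; pose w := x0 + 2 *: (z - p).
  have w_ball : ball x0 r w.
    rewrite -ball_normE /ball_ /= /w opprD addrA subrr add0r normrN normrZ.
    by rewrite ger0_norm // -ltr_pdivlMl // mulrC.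
  have -> : z = 2^-1 *: (2 *: p - x0) + 2^-1 *: w.
    rewrite -scalerDr /w addrA subrK scalerBr addrC subrK scalerA.
    by rewrite mulVf ?pnatr_eq0 ?scale1r.
  exists (2^-1 *: T k (2 *: p - x0) + 2^-1 *: T k w); first exact: convex_op_mid.
  apply: le_trans (ler_normD _ _) _; rewrite !normrZ ger0_norm ?invr_ge0 //.
  by apply: lerD; apply: ler_wpM2l; rewrite ?invr_ge0 // TM.
exists (r / 8), (2 * Mp + B + B); split => [|k z zp]; first by rewrite divr_gt0.
have zp2 : `|z - p| < r / 2 by apply: le_lt_trans zp _; lra.
have [b Tb b_le] := upper k z zp2.
have [b' Tb' b'_le] : exists2 b', bl_le L (T k (2 *: p - z)) b' & `|b'| <= B.
  by apply: upper; rewrite scaler_nat mulr2n addrAC addrK distrC.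
have lower : bl_le L (2 *: T k p - b') (T k z).
  apply: bl_le_trans _ (convex_op_ge_reflect (convT k) p z).
  exact: bl_leD2l _ (bl_leN2 Tb').
apply: le_trans (bl_norm_sandwich lower Tb) _; apply: lerD => //.
apply: le_trans (ler_normB _ _) _; apply: lerD => //.
by rewrite normrZ ger0_norm // ler_wpM2l.
Qed.

Lemma convex_family_cvg (z : nat -> X) (p l : X) :
  z @ \oo --> p -> T^~ p @ \oo --> l -> (fun k => T k (z k)) @ \oo --> l.
Proof.
have [rho [M [rho_gt0 TM]]] := convex_family_bounded_near p.
have T_lip k := convex_op_lipschitz (convT k) rho_gt0 (TM k).
exact: cvg_lipschitz_near T_lip.
Qed.

End ConvexFamily.

Theorem corollary2p6 (R : realType) (X : completeNormedModType R)
  (L : banach_lattice X) (S : R -> X -> X)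
  (xs ys : nat -> X) (x y : X) (h : nat -> R) :
  convex_C0_semigroup L S ->
  xs @ \oo --> x ->
  ys @ \oo --> y ->
  (forall n, 0 < h n) ->
  (forall n, h n.+1 <= h n) ->
  h @ \oo --> 0 ->
  (fun n => S_at S (xs n) (h n) (ys n)) @ \oo --> y.
Proof.
move=> [S_conv_bound _ _ S_cont] xs_x ys_y h_gt0 _ h_0.
pose T n := S (h n).
have convT n : convex_op L (T n) := (S_conv_bound _ (ltW (h_gt0 n))).1.
have boundT n : bounded_op (T n) := (S_conv_bound _ (ltW (h_gt0 n))).2.
have h_0r : h @ \oo --> (0 : R)^'+.
  move=> A /h_0[N _ hA]; exists N => // n /hA; apply; exact: h_gt0.
have T_id z : T^~ z @ \oo --> z := cvg_comp _ _ h_0r (S_cont z).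
have ptw_boundT z : exists M, forall n, `|T n z| <= M.
  have [M _ TM] := ex_strict_bound_gt0 (cvg_seq_bounded (cvgP _ (T_id z))).
  by exists M => n; exact: ltW (TM n Logic.I).
have T_cvg := convex_family_cvg convT boundT ptw_boundT.
have -> : y = (x + y) - x by rewrite [x + y]addrC addrK.
apply: cvgB; first exact: T_cvg (cvgD xs_x ys_y) (T_id _).
exact: T_cvg xs_x (T_id _).
Qed.
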